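(* Assume $m_y=0$ and let $\Pi=\{\pi\ge 0: B_2^\intercal\pi\le c_2^\intercal\}$. For a given $x\in\mathcal X$, consider the bilinear program $\max\{(d-B_1x-Eu)^\intercal\pi:\ u\in\mathcal U(x),\ \pi\in\Pi\}$. When it has a finite optimal value, there exists an optimal solution $(u^*,\pi^* )$ with $\pi^*$ an extreme point of $\Pi$. When it is unbounded, there exist $u^*\in\mathcal U(x)$ and an extreme ray $\gamma^*$ of $\Pi$ such that $(d-B_1x-Eu^* )^\intercal\gamma^*>0$.
   Context: Let $\mathcal X=\{x\in\mathbb Z^{m_x}_+\times\mathbb R^{n_x}_+: Ax\ge b\}$, $\mathcal U(x)=\{u\in\mathbb Z^{m_u}_+\times\mathbb R^{n_u}_+: F(x)u\le h+Gx\}$ ($F(x)$ a matrix depending on $x$), and recourse set $\mathcal Y(x,u)=\{y\in\mathbb R^{n_y}_+: B_2y\ge d-B_1x-Eu\}$ with cost row vector $c_2$. Standing assumptions: (A1) $\mathcal U(x)\ne\emptyset$ for all $x\in\mathcal X$; (A2) $\mathcal U(x)$ is bounded for all $x\in\mathcal X$; (A3) $\min\{c_1x+c_2y: x\in\mathcal X,u\in\mathcal U(x),y\in\mathcal Y(x,u)\}$ has a finite optimal value. *)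

From HB Require Import structures.
From mathcomp Require Import all_boot all_order all_algebra.
From mathcomp Require Import reals.
Set Implicit Arguments. Unset Strict Implicit. Unset Printing Implicit Defensive.
Import Order.TTheory GRing.Theory Num.Theory.
Local Open Scope ring_scope.

Section Defs.
Variable R : realType.

Definition leV n (u v : 'cV[R]_n) : Prop := forall i, u i 0 <= v i 0.

Definition mixed_nonneg m n (z : 'cV[R]_(m + n)) : Prop :=
  forall i : 'I_(m + n), 0 <= z i 0 /\ ((i < m)%N -> exists k : int, z i 0 = k%:~R).

Definition boundedV n (S : 'cV[R]_n -> Prop) : Prop :=
  exists M : R, forall z, S z -> forall i, `|z i 0| <= M.

Definition extreme_point n (S : 'cV[R]_n -> Prop) (p : 'cV[R]_n) : Prop :=
  S p /\ forall a b (t : R), S a -> S b -> 0 < t -> t < 1 ->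
    p = t *: a + (1 - t) *: b -> a = b.

Definition recession_cone n (S : 'cV[R]_n -> Prop) (g : 'cV[R]_n) : Prop :=
  forall p, S p -> forall t : R, 0 <= t -> S (p + t *: g).

Definition extreme_ray n (S : 'cV[R]_n -> Prop) (g : 'cV[R]_n) : Prop :=
  recession_cone S g /\ g != 0 /\
  forall g1 g2, recession_cone S g1 -> recession_cone S g2 -> g = g1 + g2 ->
    exists a : R, 0 <= a /\ g1 = a *: g.

End Defs.

From HB Require Import structures.
From mathcomp Require Import all_boot all_order all_algebra.
From mathcomp Require Import reals.
From mathcomp Require Import lra zify.
From Stdlib Require Import Classical.
Import Order.TTheory GRing.Theory Num.Theory.
Local Open Scope ring_scope.
Set Implicit Arguments. Unset Strict Implicit. Unset Printing Implicit Defensive.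

(* For fixed u, maximizing over pi is a linear program over the pointed
   polyhedron Pi: either a recession direction of Pi improves the objective,
   or the objective is dominated by one of the finitely many vertices of Pi.
   For a fixed vertex pi the objective is affine in u, and over the bounded
   mixed-integer set U(x) it is dominated by one of finitely many basic points
   (the integer part takes finitely many values).  So if no improving
   direction exists, the supremum is a maximum over finitely many pairs
   (u, vertex).  If an improving direction exists, a vertex of the slice of
   the recession cone on which the objective equals 1 is an extreme ray.
   Vertices are reached by the ratio test: moving along a nonzero direction
   that vanishes on the active constraints either activates a new constraint
   or exhibits an improving ray. *)

Section LinearProgramming.
Variable R : realType.

Definition lin n (a : 'rV[R]_n) (p : 'cV[R]_n) : R := (a *m p) 0 0.

Lemma linD n (a : 'rV[R]_n) p q : lin a (p + q) = lin a p + lin a q.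
Proof. by rewrite /lin mulmxDr mxE. Qed.

Lemma linZ n (a : 'rV[R]_n) t p : lin a (t *: p) = t * lin a p.
Proof. by rewrite /lin -scalemxAr mxE. Qed.

Lemma linN n (a : 'rV[R]_n) p : lin a (- p) = - lin a p.
Proof. by rewrite /lin mulmxN mxE. Qed.

Lemma linB n (a : 'rV[R]_n) p q : lin a (p - q) = lin a p - lin a q.
Proof. by rewrite linD linN. Qed.

Lemma lin0 n (a : 'rV[R]_n) : lin a 0 = 0.
Proof. by rewrite /lin mulmx0 mxE. Qed.

Lemma linNr n (a : 'rV[R]_n) p : lin (- a) p = - lin a p.
Proof. by rewrite /lin mulNmx mxE. Qed.

Lemma seq_argmax (T : eqType) (phi : T -> R) (s : seq T) : s != [::] ->
  exists2 x, x \in s & forall y, y \in s -> phi y <= phi x.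
Proof.
elim: s => [//|x s IH] _.
have [->|/IH [m ms mmax]] := eqVneq s [::].
  by exists x; rewrite ?mem_head // => y; rewrite inE => /eqP ->.
have [xm|mx] := lerP (phi m) (phi x).
  exists x; rewrite ?mem_head // => y; rewrite inE => /predU1P [->//|/mmax].
  by move/le_trans; apply.
exists m; rewrite ?inE ?ms ?orbT // => y /predU1P [->|/mmax //]; exact: ltW.
Qed.

Lemma functional_image_finite (T : finType) (V : eqType) (P : T -> V -> Prop) :
  (forall t v v', P t v -> P t v' -> v = v') ->
  exists L : seq V, (forall v, v \in L -> exists t, P t v) /\
                    (forall t v, P t v -> v \in L).
Proof.
move=> Pfun.
suff [L [LP PL]] : exists L : seq V, (forall v, v \in L -> exists t, P t v) /\
    (forall t, t \in enum T -> forall v, P t v -> v \in L).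
  by exists L; split=> // t v; apply: PL; rewrite mem_enum.
elim: (enum T) => [|t s [L [LP PL]]].
  by exists [::]; split=> // v; rewrite in_nil.
have [[v Ptv]|noPt] := classic (exists v, P t v).
- exists (v :: L); split.
    by move=> v' /predU1P [->|/LP //]; exists t.
  move=> t' /predU1P [-> v' /(Pfun _ _ _ Ptv) <-|t's v' /(PL _ t's) vL];
    by rewrite inE ?eqxx ?vL ?orbT.
- exists L; split=> // t' /predU1P [-> v Ptv|]; last exact: PL.
  by case: noPt; exists v.
Qed.


Section MixedPolyhedron.
Variables (n : nat) (I : finType) (a : I -> 'rV[R]_n) (c : I -> R).
Variables (D Q : 'cV[R]_n -> Prop).
Hypothesis D_scale : forall d t, D d -> D (t *: d).
Hypothesis Q_translate : forall p d t, Q p -> D d -> Q (p + t *: d).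
Hypothesis D_pointed : forall d, D d -> (forall i, lin (a i) d = 0) -> d = 0.

(* The feasible set is {p | Q p /\ a_i p <= c_i}, where Q is invariant along
   the directions D; for U(x), Q is integrality of the first coordinates and D
   the directions that leave them fixed. *)

Definition feasible p := Q p /\ forall i, lin (a i) p <= c i.

Definition active p := [set i | lin (a i) p == c i].

Definition basic p :=
  forall d, D d -> (forall i, i \in active p -> lin (a i) d = 0) -> d = 0.

Definition improving_ray (w : 'rV[R]_n) :=
  exists g, [/\ D g, forall i, lin (a i) g <= 0 & 0 < lin w g].

Definition improving_step (w : 'rV[R]_n) p :=
  exists p', [/\ feasible p', active p \proper active p' & lin w p <= lin w p'].

Lemma feasible_ray p g t : feasible p -> D g -> (forall i, lin (a i) g <= 0) ->
  0 <= t -> feasible (p + t *: g).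
Proof.
move=> [Qp Fp] Dg g_le0 t_ge0; split=> [|i]; first exact: Q_translate.
by rewrite linD linZ; have := mulr_ge0_le0 t_ge0 (g_le0 i); have := Fp i; lra.
Qed.

Lemma recession_le0 p g : feasible p ->
  (forall t, 0 <= t -> feasible (p + t *: g)) -> forall i, lin (a i) g <= 0.
Proof.
move=> [_ Fp] rec i; rewrite leNgt; apply/negP => ag_gt0.
pose t := (`|c i - lin (a i) p| + 1) / lin (a i) g.
have t_ge0 : 0 <= t by rewrite divr_ge0 ?ltW // ltr_wpDl.
have [_ /(_ i)] := rec t t_ge0; rewrite linD linZ /t divfK ?gt_eqF //.
by have := ler_norm (c i - lin (a i) p); lra.
Qed.

Lemma ratio_test_step w p d : feasible p -> D d ->
  (forall i, i \in active p -> lin (a i) d = 0) -> 0 <= lin w d ->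
  [exists j, 0 < lin (a j) d] -> improving_step w p.
Proof.
move=> [Qp Fp] Dd d_act wd_ge0 /existsP [j0 aj0_gt0].
pose ratio j := (c j - lin (a j) p) / lin (a j) d.
have [j aj_gt0 jmin] := @arg_minP _ _ _ j0 (fun j => 0 < lin (a j) d) ratio aj0_gt0.
have t_ge0 : 0 <= ratio j by rewrite divr_ge0 ?subr_ge0 ?Fp ?ltW.
exists (p + ratio j *: d); split; first split.
- exact: Q_translate.
- move=> i; rewrite linD linZ.
  have [ai_gt0|ai_le0] := ltrP 0 (lin (a i) d).
    by have := jmin i ai_gt0; rewrite ler_pdivlMr // => ?; lra.
  by have := mulr_ge0_le0 t_ge0 ai_le0; have := Fp i; lra.
- apply/properP; split.
    apply/subsetP => i i_act; have := d_act i i_act; move: i_act.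
    by rewrite !inE linD linZ => /eqP -> ->; rewrite mulr0 addr0.
  exists j; first by rewrite inE linD linZ /ratio divfK ?lt0r_neq0 // addrC subrK.
  by apply/negP => /d_act; apply/eqP; rewrite gt_eqF.
- by rewrite linD linZ lerDl mulr_ge0.
Qed.

Lemma direction_step w p d : feasible p -> D d -> d != 0 ->
  (forall i, i \in active p -> lin (a i) d = 0) -> 0 <= lin w d ->
  improving_ray w \/ improving_step w p.
Proof.
move=> Fp Dd d_neq0 d_act wd_ge0.
have [?|/existsPn d_le0] := boolP [exists j, 0 < lin (a j) d].
  by right; apply: (ratio_test_step Fp Dd d_act wd_ge0).
have {}d_le0 j : lin (a j) d <= 0 by rewrite leNgt d_le0.
have [wd_gt0|] := ltrP 0 (lin w d); first by left; exists d.
move=> wd_le0; right; apply: (@ratio_test_step _ _ (- d) Fp).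
- by rewrite -scaleN1r; apply: D_scale.
- by move=> i /d_act; rewrite linN => ->; rewrite oppr0.
- by rewrite linN; lra.
apply: contraNT d_neq0 => /existsPn ad_ge0; apply/eqP/D_pointed => // j.
by apply/le_anti; rewrite d_le0 /= -oppr_le0 -linN leNgt ad_ge0.
Qed.

Lemma nonbasic_step w p : feasible p -> ~ basic p ->
  improving_ray w \/ improving_step w p.
Proof.
move=> Fp NBp.
have [d [Dd d_act d_neq0]] : exists d,
    [/\ D d, forall i, i \in active p -> lin (a i) d = 0 & d != 0].
  apply: NNPP => none; apply: NBp => d Dd d_act; apply: NNPP => d_neq0.
  by apply: none; exists d; split=> //; apply/eqP.
have [wd_ge0|wd_lt0] := lerP 0 (lin w d).
  exact: (direction_step Fp Dd d_neq0 d_act wd_ge0).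
apply: (direction_step (d := - d)) => //.
- by rewrite -scaleN1r; apply: D_scale.
- by rewrite oppr_eq0.
- by move=> i /d_act; rewrite linN => ->; rewrite oppr0.
- by rewrite linN; lra.
Qed.

Lemma vertex_or_ray w p : feasible p ->
  improving_ray w \/ exists p', [/\ feasible p', basic p' & lin w p <= lin w p'].
Proof.
have [N] := ubnP (#|I| - #|active p|); elim: N p => [//|N IH] p gap Fp.
have [Bp|NBp] := classic (basic p); first by right; exists p.
case: (nonbasic_step w Fp NBp) => [|[p' [Fp' act_lt wp_le]]]; first by left.
have gap' : (#|I| - #|active p'| < N)%N.
  have := proper_card act_lt; have := max_card (mem (active p')).
  by rewrite -/#|active p'|; lia.
case: (IH p' gap' Fp') => [|[q [Fq Bq wq]]]; first by left.
by right; exists q; split=> //; exact: le_trans wp_le wq.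
Qed.

Lemma basic_extreme v p1 p2 t : basic v -> feasible p1 -> feasible p2 ->
  D (p1 - p2) -> 0 < t -> t < 1 -> v = t *: p1 + (1 - t) *: p2 -> p1 = p2.
Proof.
move=> Bv [_ F1] [_ F2] D12 t_gt0 t_lt1 v_eq.
apply/eqP; rewrite -subr_eq0; apply/eqP/Bv => // i.
rewrite inE v_eq linD !linZ linB => /eqP act_i.
by have := F1 i; have := F2 i; nra.
Qed.

Lemma basic_unique v v' : basic v -> D (v - v') -> active v = active v' -> v = v'.
Proof.
move=> Bv Dvv' act_eq; apply/eqP; rewrite -subr_eq0; apply/eqP/Bv => // i act_i.
have act'_i : i \in active v' by rewrite -act_eq.
by move: act_i act'_i; rewrite !inE linB => /eqP -> /eqP ->; rewrite subrr.
Qed.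

Lemma basic_dominating_set (K : finType) (key : 'cV[R]_n -> K) :
  (forall v v', feasible v -> feasible v' -> key v = key v' -> D (v - v')) ->
  exists L : seq 'cV[R]_n, (forall v, v \in L -> feasible v /\ basic v) /\
    forall w p, feasible p ->
      improving_ray w \/ exists2 p', p' \in L & lin w p <= lin w p'.
Proof.
move=> key_D.
pose P (s : {set I} * K) v := [/\ feasible v, basic v, active v = s.1 & key v = s.2].
have P_fun s v v' : P s v -> P s v' -> v = v'.
  case=> Fv Bv act kv [Fv' _ act' kv']; apply: basic_unique => //.
    by apply: key_D => //; rewrite kv kv'.
  by rewrite act act'.
have [L [LP PL]] := functional_image_finite P_fun.
exists L; split=> [v /LP [s []] //|w p Fp].
case: (vertex_or_ray w Fp) => [|[v [Fv Bv wv]]]; first by left.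
by right; exists v => //; apply: (PL (active v, key v)).
Qed.

End MixedPolyhedron.

Section PointedCone.
Variables (n : nat) (I : finType) (a : I -> 'rV[R]_n).
Hypothesis cone_pointed : forall g, (forall i, lin (a i) g = 0) -> g = 0.

Definition cone g := forall i, lin (a i) g <= 0.

Lemma cone_slice_basic w g : cone g -> 0 < lin w g ->
  exists v, [/\ cone v, lin w v = 1 &
    forall d, (forall i, lin (a i) v = 0 -> lin (a i) d = 0) -> lin w d = 0 -> d = 0].
Proof.
move=> g_cone wg_gt0.
(* the slice adds the rows [w <= 1] and [- w <= -1] to the cone *)
pose a' (s : I + bool) := match s with inl i => a i | inr b => if b then w else - w end.
pose c' (s : I + bool) : R := match s with inl _ => 0 | inr b => if b then 1 else -1 end.
pose T (_ : 'cV[R]_n) := True.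
have T_scale d t : T d -> T (t *: d) by [].
have T_translate p d t : T p -> T d -> T (p + t *: d) by [].
have T_pointed d : T d -> (forall s, lin (a' s) d = 0) -> d = 0.
  by move=> _ ad0; apply: cone_pointed => i; exact: (ad0 (inl i)).
have F0 : feasible a' c' T ((lin w g)^-1 *: g).
  split=> // -[i|[]] /=; rewrite ?linNr linZ ?mulVf ?gt_eqF //.
  by rewrite mulr_ge0_le0 ?g_cone // invr_ge0 ltW.
have [[g' [_ _]]|[v [[_ Fv] Bv _]]] := vertex_or_ray T_scale T_translate T_pointed 0 F0.
  by rewrite /lin mul0mx mxE ltxx.
have wv : lin w v = 1.
  by have := Fv (inr true); have := Fv (inr false); rewrite /= linNr; lra.
exists v; split=> [i|//|d ad0 wd0]; first exact: (Fv (inl i)).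
apply: Bv => // -[i|[]]; rewrite inE /= ?linNr ?wd0 ?oppr0 // => /eqP; exact: ad0.
Qed.

Lemma cone_extreme_ray w g : cone g -> 0 < lin w g ->
  exists v, [/\ cone v, lin w v = 1 & forall g1 g2, cone g1 -> cone g2 ->
    v = g1 + g2 -> exists2 t, 0 <= t & g1 = t *: v].
Proof.
move=> g_cone wg_gt0.
have [v [v_cone wv v_basic]] := cone_slice_basic g_cone wg_gt0.
exists v; split=> // g1 g2 g1_cone g2_cone v_eq.
have g1_eq : g1 = lin w g1 *: v.
  apply/eqP; rewrite -subr_eq0; apply/eqP/v_basic => [i av0|].
    have : lin (a i) g1 + lin (a i) g2 = 0 by rewrite -linD -v_eq.
    by rewrite linB linZ av0 mulr0 subr0; have := g1_cone i; have := g2_cone i; lra.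
  by rewrite linB linZ wv mulr1 subrr.
exists (lin w g1) => //; rewrite leNgt; apply/negP => wg1_lt0.
suff v0 : v = 0 by move: wv; rewrite v0 lin0; lra.
(* v and the negative multiple g1 of v both lie in the pointed cone *)
apply: cone_pointed => i; apply/le_anti; rewrite v_cone /=.
by have := g1_cone i; rewrite {1}g1_eq linZ; nra.
Qed.
End PointedCone.

(* The system [p >= 0, M p <= h] as rows indexed by ['I_n + 'I_q]. *)
Definition sys_row n q (M : 'M[R]_(q, n)) (s : 'I_n + 'I_q) : 'rV[R]_n :=
  match s with inl i => - delta_mx 0 i | inr j => row j M end.

Definition sys_rhs n q (h : 'cV[R]_q) (s : 'I_n + 'I_q) : R :=
  match s with inl _ => 0 | inr j => h j 0 end.

Lemma lin_sys_row_inl n q (M : 'M[R]_(q, n)) i p :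
  lin (sys_row M (inl i)) p = - p i 0.
Proof. by rewrite /= linNr /lin -rowE mxE. Qed.

Lemma lin_sys_row_inr n q (M : 'M[R]_(q, n)) j p :
  lin (sys_row M (inr j)) p = (M *m p) j 0.
Proof. by rewrite /lin -row_mul mxE. Qed.

Lemma sys_pointed n q (M : 'M[R]_(q, n)) g :
  (forall s, lin (sys_row M s) g = 0) -> g = 0.
Proof.
move=> g_ker; apply/matrixP => i j; rewrite ord1 mxE.
by have := g_ker (inl i); rewrite lin_sys_row_inl; lra.
Qed.

Lemma feasible_sysE n q (M : 'M[R]_(q, n)) h (Q : 'cV[R]_n -> Prop) p :
  feasible (sys_row M) (sys_rhs h) Q p <-> [/\ Q p, leV 0 p & leV (M *m p) h].
Proof.
split=> [[Qp Fp]|[Qp p_ge0 Mp_le]].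
  split=> // i; first by have := Fp (inl i); rewrite lin_sys_row_inl mxE /=; lra.
  by have := Fp (inr i); rewrite lin_sys_row_inr.
split=> // -[i|j]; last by rewrite lin_sys_row_inr; exact: Mp_le.
by rewrite lin_sys_row_inl /=; have := p_ge0 i; rewrite mxE; lra.
Qed.

Section Polyhedron.
Variables (n q : nat) (M : 'M[R]_(q, n)) (h : 'cV[R]_q) (S : 'cV[R]_n -> Prop).
Hypothesis SE : forall p, S p <-> leV 0 p /\ leV (M *m p) h.

Let T (_ : 'cV[R]_n) := True.

Lemma polyhedron_feasibleE p : S p <-> feasible (sys_row M) (sys_rhs h) T p.
Proof. by rewrite SE feasible_sysE; split=> [[]|[]]. Qed.

Lemma cone_recession g : cone (sys_row M) g -> recession_cone S g.
Proof.
move=> g_cone p /polyhedron_feasibleE Sp t t_ge0; apply/polyhedron_feasibleE.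
exact: (feasible_ray (D := T) (fun _ _ _ _ _ => I) Sp I g_cone t_ge0).
Qed.

Lemma recession_cone_sub p g : S p -> recession_cone S g -> cone (sys_row M) g.
Proof.
move=> Sp g_rec; apply: (recession_le0 ((polyhedron_feasibleE p).1 Sp)) => t t_ge0.
exact/polyhedron_feasibleE/g_rec.
Qed.

Lemma polyhedron_vertex_dominating_set : exists L : seq 'cV[R]_n,
  (forall p, p \in L -> extreme_point S p) /\
  forall w p, S p -> (exists g, recession_cone S g /\ 0 < lin w g) \/
    exists2 p', p' \in L & lin w p <= lin w p'.
Proof.
have T_pointed d : T d -> (forall s, lin (sys_row M s) d = 0) -> d = 0.
  by move=> _; exact: sys_pointed.
have [||L [LP Ldom]] := @basic_dominating_set _ _ _ (sys_rhs h) T T _ _ T_pointed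
  unit (fun _ => tt) (fun _ _ _ _ _ => I) => //.
exists L; split=> [p /LP [Fp Bp]|w p /polyhedron_feasibleE Sp].
  split=> [|p1 p2 t /polyhedron_feasibleE S1 /polyhedron_feasibleE S2].
    exact/polyhedron_feasibleE.
  exact: (basic_extreme Bp S1 S2 I).
case: (Ldom w p Sp) => [[g [_ g_cone wg]]|]; last by right.
by left; exists g; split=> //; exact: cone_recession.
Qed.

Lemma polyhedron_extreme_ray p w g : S p -> recession_cone S g -> 0 < lin w g ->
  exists v, extreme_ray S v /\ 0 < lin w v.
Proof.
move=> Sp g_rec wg_gt0.
have [|v [v_cone wv v_ext]] := cone_extreme_ray _ (recession_cone_sub Sp g_rec) wg_gt0.
  exact: sys_pointed.
exists v; split; last by rewrite wv ltr01.
split; first exact: cone_recession.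
split; first by apply: contra_eqN wv => /eqP ->; rewrite lin0 eq_sym oner_eq0.
move=> g1 g2 /(recession_cone_sub Sp) g1_cone /(recession_cone_sub Sp) g2_cone v_eq.
by have [t t_ge0 ->] := v_ext g1 g2 g1_cone g2_cone v_eq; exists t.
Qed.
End Polyhedron.

Lemma bounded_ray n (S : 'cV[R]_n -> Prop) p g : boundedV S ->
  (forall t, 0 <= t -> S (p + t *: g)) -> g = 0.
Proof.
move=> [Mb S_bnd] ray; apply/matrixP => i j; rewrite ord1 mxE.
apply/eqP/negP => /negP gi_neq0; have gi_gt0 : 0 < `|g i 0| by rewrite normr_gt0.
pose t := (Mb + `|p i 0| + 1) / `|g i 0|.
have pi_le : `|p i 0| <= Mb by have := S_bnd _ (ray 0 (lexx _)) i; rewrite scale0r addr0.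
have t_ge0 : 0 <= t.
  by rewrite divr_ge0 ?ltW //; have := normr_ge0 (p i 0); lra.
have tg : `|t * g i 0| = Mb + `|p i 0| + 1.
  by rewrite normrM (ger0_norm t_ge0) divfK ?gt_eqF.
have := S_bnd _ (ray t t_ge0) i; rewrite !mxE.
by have := ler_normB (p i 0 + t * g i 0) (p i 0); rewrite [p i 0 + _]addrC addrK tg; lra.
Qed.

Definition truncn_key k N (u : 'cV[R]_k) : {ffun 'I_k -> 'I_N.+1} :=
  [ffun i => inord (Num.truncn (u i 0))].

Lemma truncn_key_eq mu nu (Mb : R) (u v : 'cV[R]_(mu + nu)) :
  mixed_nonneg u -> mixed_nonneg v ->
  (forall i, `|u i 0| <= Mb) -> (forall i, `|v i 0| <= Mb) ->
  truncn_key (Num.truncn Mb) u = truncn_key _ v ->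
  forall i : 'I_(mu + nu), (i < mu)%N -> u i 0 = v i 0.
Proof.
move=> u_mixed v_mixed u_le v_le key_eq i i_lt.
have nat_coord (z : 'cV[R]_(mu + nu)) : mixed_nonneg z -> z i 0 \is a Num.nat.
  by move=> /(_ i) [z_ge0 /(_ i_lt) [k z_eq]]; rewrite -intrEge0 // z_eq intr_int.
have truncn_lt (z : 'cV[R]_(mu + nu)) :
    (forall i, `|z i 0| <= Mb) -> (Num.truncn (z i 0%R) < (Num.truncn Mb).+1)%N.
  by move=> z_le; rewrite ltnS le_truncn // (le_trans (ler_norm _)).
have := congr1 (fun f : {ffun 'I_(mu + nu) -> _} => val (f i)) key_eq.
rewrite !ffunE /= !inordK ?truncn_lt // => trunc_eq.
by rewrite -(truncnK (nat_coord _ u_mixed)) trunc_eq truncnK ?nat_coord.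
Qed.

Lemma mixed_polyhedron_dominating_set mu nu q (M : 'M[R]_(q, mu + nu)) h
    (S : 'cV[R]_(mu + nu) -> Prop) :
  (forall u, S u <-> mixed_nonneg u /\ leV (M *m u) h) -> boundedV S ->
  exists L : seq 'cV[R]_(mu + nu), (forall u, u \in L -> S u) /\
    forall w u, S u -> exists2 u', u' \in L & lin w u <= lin w u'.
Proof.
move=> SE S_bnd; have [Mb S_le] := S_bnd.
pose D (d : 'cV[R]_(mu + nu)) := forall i : 'I_(mu + nu), (i < mu)%N -> d i 0 = 0.
pose Q (u : 'cV[R]_(mu + nu)) :=
  forall i : 'I_(mu + nu), (i < mu)%N -> exists k : int, u i 0 = k%:~R.
have D_scale d t : D d -> D (t *: d) by move=> Dd i /Dd; rewrite mxE => ->; rewrite mulr0.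
have Q_translate p d t : Q p -> D d -> Q (p + t *: d).
  by move=> Qp Dd i i_lt; rewrite !mxE Dd // mulr0 addr0; exact: Qp.
have D_pointed d : D d -> (forall s, lin (sys_row M s) d = 0) -> d = 0.
  by move=> _; exact: sys_pointed.
have SF u : S u <-> feasible (sys_row M) (sys_rhs h) Q u.
  rewrite SE feasible_sysE; split=> [[u_mixed uM]|[Qu u_ge0 uM]]; split=> // i.
  - by have [] := u_mixed i.
  - by rewrite mxE; have [] := u_mixed i.
  - by split; [have := u_ge0 i; rewrite mxE | exact: Qu].
(* basic points with the same active set and the same (bounded) integer part coincide *)
have key_D v v' : feasible (sys_row M) (sys_rhs h) Q v ->
    feasible (sys_row M) (sys_rhs h) Q v' ->
    truncn_key (Num.truncn Mb) v = truncn_key _ v' -> D (v - v').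
  move=> /SF /[dup] Sv /SE [v_mixed _] /SF /[dup] Sv' /SE [v'_mixed _] key_eq i i_lt.
  rewrite !mxE (truncn_key_eq v_mixed v'_mixed (S_le _ Sv) (S_le _ Sv') key_eq) //.
  by rewrite subrr.
have [L [LP Ldom]] := basic_dominating_set D_scale Q_translate D_pointed key_D.
exists L; split=> [u /LP [/SF]//|w u /SF Fu].
case: (Ldom w u Fu) => [[g [Dg g_cone wg_gt0]]|//].
have g0 : g = 0.
  apply: (bounded_ray S_bnd) => t t_ge0; apply/SF.
  exact: (feasible_ray Q_translate Fu Dg g_cone t_ge0).
by move: wg_gt0; rewrite g0 lin0 ltxx.
Qed.

Section BilinearProgram.
Variables (mu nu q r ny : nat) (M : 'M[R]_(q, mu + nu)) (h : 'cV[R]_q).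
Variables (B2 : 'M[R]_(r, ny)) (c2 : 'rV[R]_ny) (f : 'cV[R]_r) (E : 'M[R]_(r, mu + nu)).
Variables (inU : 'cV[R]_(mu + nu) -> Prop) (Pi : 'cV[R]_r -> Prop).
Variable obj : 'cV[R]_(mu + nu) -> 'cV[R]_r -> R.
Hypothesis UE : forall u, inU u <-> mixed_nonneg u /\ leV (M *m u) h.
Hypothesis U_bounded : boundedV inU.
Hypothesis PiE : forall pi, Pi pi <-> leV 0 pi /\ leV (B2^T *m pi) c2^T.
Hypothesis objE : forall u pi, obj u pi = lin (f - E *m u)^T pi.

Let unbounded_direction :=
  exists u g, [/\ inU u, recession_cone Pi g & 0 < lin (f - E *m u)^T g].

Lemma obj_split u pi : obj u pi = lin f^T pi - lin (pi^T *m E) u.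
Proof.
rewrite objE /lin linearB /= mulmxBl mxE [X in _ + X]mxE; congr (_ - _).
have -> : (E *m u)^T *m pi = ((pi^T *m E) *m u)^T by rewrite !trmx_mul trmxK mulmxA.
by rewrite mxE.
Qed.

Lemma bilinear_dominating_pairs : ~ unbounded_direction ->
  exists L : seq ('cV[R]_(mu + nu) * 'cV[R]_r),
    (forall pr, pr \in L -> inU pr.1 /\ extreme_point Pi pr.2) /\
    forall u pi, inU u -> Pi pi -> exists2 pr, pr \in L & obj u pi <= obj pr.1 pr.2.
Proof.
move=> no_dir.
have [LU [LU_U LU_dom]] := mixed_polyhedron_dominating_set UE U_bounded.
have [LP [LP_ext LP_dom]] := polyhedron_vertex_dominating_set PiE.
exists [seq (u, pi) | u <- LU, pi <- LP]; split.
  by move=> _ /allpairsP [[u pi] [/= uL piL ->]]; split; [exact: LU_U | exact: LP_ext].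
move=> u pi Uu Ppi.
have [[g [g_rec wg]]|[pi' pi'L obj_le]] := LP_dom (f - E *m u)^T pi Ppi.
  by case: no_dir; exists u, g.
(* for the vertex pi', the objective is affine in u *)
have [u' u'L obj_le'] := LU_dom (- (pi'^T *m E)) u Uu.
exists (u', pi'); first exact: allpairs_f.
rewrite /= (objE u) (le_trans obj_le) // -objE !obj_split.
by move: obj_le'; rewrite !linNr; lra.
Qed.

Lemma bilinear_max_attained : ~ unbounded_direction ->
  (exists u pi, inU u /\ Pi pi) ->
  exists us pis, [/\ inU us, extreme_point Pi pis &
    forall u pi, inU u -> Pi pi -> obj u pi <= obj us pis].
Proof.
move=> no_dir [u0 [pi0 [U0 P0]]].
have [L [L_feas L_dom]] := bilinear_dominating_pairs no_dir.
have [pr0 pr0L _] := L_dom u0 pi0 U0 P0.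
have [|[us pis] prL pr_max] := seq_argmax (fun pr => obj pr.1 pr.2) (s := L).
  by apply: contraTneq pr0L => ->.
have [Uus Epis] := L_feas _ prL.
exists us, pis; split=> // u pi Uu Ppi.
by have [pr prL' /le_trans] := L_dom u pi Uu Ppi; apply; exact: pr_max.
Qed.

Lemma bounded_no_direction pi0 Mx : Pi pi0 ->
  (forall u pi, inU u -> Pi pi -> obj u pi <= Mx) -> ~ unbounded_direction.
Proof.
move=> P0 obj_le [u [g [Uu g_rec wg_gt0]]].
pose t := (`|Mx - obj u pi0| + 1) / lin (f - E *m u)^T g.
have t_ge0 : 0 <= t by rewrite divr_ge0 ?ltW // ltr_wpDl.
have := obj_le u _ Uu (g_rec pi0 P0 t t_ge0).
rewrite !objE linD linZ /t divfK ?gt_eqF // -objE.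
by have := ler_norm (Mx - obj u pi0); lra.
Qed.

Lemma bilinear_unbounded_ray :
  (forall Mx, exists u pi, [/\ inU u, Pi pi & Mx < obj u pi]) ->
  exists us gs, [/\ inU us, extreme_ray Pi gs & 0 < obj us gs].
Proof.
move=> unbnd; have [u0 [pi0 [U0 P0 _]]] := unbnd 0.
have [[u [g [Uu g_rec wg_gt0]]]|no_dir] := classic unbounded_direction.
  have [v [v_ray wv]] := polyhedron_extreme_ray PiE P0 g_rec wg_gt0.
  by exists u, v; rewrite objE.
have [|us [pis [_ _ obj_max]]] := bilinear_max_attained no_dir; first by exists u0, pi0.
have [u [pi [Uu Ppi]]] := unbnd (obj us pis).
by have := obj_max u pi Uu Ppi; lra.
Qed.
End BilinearProgram.
End LinearProgramming.

Theorem corollary3 (R : realType)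
  (mx nx mu nu ny p q r : nat)
  (A : 'M[R]_(p, mx + nx)) (b : 'cV[R]_p)
  (F : 'cV[R]_(mx + nx) -> 'M[R]_(q, mu + nu)) (h : 'cV[R]_q)
  (G : 'M[R]_(q, mx + nx))
  (B1 : 'M[R]_(r, mx + nx)) (B2 : 'M[R]_(r, ny)) (E : 'M[R]_(r, mu + nu))
  (d : 'cV[R]_r) (c1 : 'rV[R]_(mx + nx)) (c2 : 'rV[R]_ny)
  (inX : 'cV[R]_(mx + nx) -> Prop)
  (inU : 'cV[R]_(mx + nx) -> 'cV[R]_(mu + nu) -> Prop)
  (inY : 'cV[R]_(mx + nx) -> 'cV[R]_(mu + nu) -> 'cV[R]_ny -> Prop)
  (Pi : 'cV[R]_r -> Prop)
  (obj : 'cV[R]_(mx + nx) -> 'cV[R]_(mu + nu) -> 'cV[R]_r -> R) :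
  (* the sets X, U(x), Y(x,u) and Pi, and the bilinear objective *)
  (forall x, inX x <-> mixed_nonneg x /\ leV b (A *m x)) ->
  (forall x u, inU x u <-> mixed_nonneg u /\ leV (F x *m u) (h + G *m x)) ->
  (forall x u y, inY x u y <->
     leV 0 y /\ leV (d - B1 *m x - E *m u) (B2 *m y)) ->
  (forall pi, Pi pi <-> leV 0 pi /\ leV (B2^T *m pi) c2^T) ->
  (forall x u pi, obj x u pi = ((d - B1 *m x - E *m u)^T *m pi) 0 0) ->
  (* standing assumptions (A1), (A2), (A3) *)
  (forall x, inX x -> exists u, inU x u) ->
  (forall x, inX x -> boundedV (inU x)) ->
  ((exists x u y, inX x /\ inU x u /\ inY x u y) /\
   (exists L : R, forall x u y, inX x -> inU x u -> inY x u y ->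
      L <= (c1 *m x) 0 0 + (c2 *m y) 0 0)) ->
  forall x, inX x ->
  (* finite optimal value => optimal solution with pi* an extreme point *)
  (((exists u pi, inU x u /\ Pi pi) /\
    (exists M : R, forall u pi, inU x u -> Pi pi -> obj x u pi <= M)) ->
   exists us pis, inU x us /\ extreme_point Pi pis /\
     forall u pi, inU x u -> Pi pi -> obj x u pi <= obj x us pis)
  /\
  (* unbounded => u* and an extreme ray gamma* with positive objective *)
  ((forall M : R, exists u pi, inU x u /\ Pi pi /\ M < obj x u pi) ->
   exists us gs, inU x us /\ extreme_ray Pi gs /\ 0 < obj x us gs).
Proof.
(* Only (A2) is needed: x is fixed and each case supplies a feasible pair. *)
move=> _ HU _ HPi Hobj _ A2 _ x Xx.
have U_bounded := A2 x Xx.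
split=> [[nonempty [Mx obj_le]]|unbnd].
  have [_ [pi0 [_ P0]]] := nonempty.
  have no_dir := bounded_no_direction (Hobj x) P0 obj_le.
  have [us [pis [Uus Epis obj_max]]] :=
    bilinear_max_attained (HU x) U_bounded HPi (Hobj x) no_dir nonempty.
  by exists us, pis.
have [|us [gs [Uus gs_ray obj_gt0]]] :=
  bilinear_unbounded_ray (HU x) U_bounded HPi (Hobj x).
  by move=> Mx; have [u [pi [Uu [Ppi obj_gt]]]] := unbnd Mx; exists u, pi.
by exists us, gs.
Qed.
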